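(* Fix $J=(J_1,J_2)\in\mathbb{R}^2$ and let $S(J)=\{m\in\{1,2,3,4\}: U_m(J)=\min\{U_1(J),U_2(J),U_3(J),U_4(J)\}\}$ and $\mathcal{C}_{S(J)}=\bigcup_{m\in S(J)}\mathcal{C}_m$. Suppose that for every unit ball $b$, every configuration $\sigma_b$ on $b$ belonging to $\mathcal{C}_{S(J)}$ and every unit ball $b'$ neighbouring $b$, there exists exactly one configuration $\sigma'_{b'}$ on $b'$ belonging to $\mathcal{C}_{S(J)}$ that is compatible with $\sigma_b$. Then every ground state $a$ (equivalently, every periodic $a$ with $a_b\in\mathcal{C}_{S(J)}$ for all unit balls $b$) has period not exceeding 2.
   Context: $G_2$ is the free product of three cyclic groups of order two with generators $a_1,a_2,a_3$, identified with the vertex set $V$ of the Cayley tree of order 2 ($g,h$ adjacent iff $h=ga_i$ for some $i$); $d$ is the graph distance. A configuration $\sigma:V\to\{-1,1\}$ is periodic if there is a finite-index subgroup $G^*\subset G_2$ with $\sigma(gh)=\sigma(h)$ for all $g\in G^*,h\in G_2$; it has period not exceeding 2 if such a subgroup of index at most 2 exists. A unit ball is $b=\{y:d(x,y)\le1\}$ (center $x$ and three leaves); $a_b$ is the restriction to $b$. Two distinct unit balls are neighbours if they share an edge; configurations on neighbouring balls are compatible if they coincide on the endpoints of the common edge. A configuration on a unit ball belongs to $\mathcal{C}_1,\mathcal{C}_2,\mathcal{C}_4,\mathcal{C}_3$ according as exactly $3,2,1,0$ of its leaves carry the same value as its center. $U_1(J)=\tfrac32J_1+3J_2$, $U_2(J)=\tfrac12J_1-J_2$,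 $U_3(J)=-\tfrac32J_1+3J_2$, $U_4(J)=-\tfrac12J_1-J_2$ are the values on $\mathcal{C}_1,\dots,\mathcal{C}_4$ of the ball energy $U(\sigma_b)=\tfrac12J_1\sum_{\langle x,y\rangle:\,x,y\in b}\sigma(x)\sigma(y)+J_2\sum_{\{x,y\}\subset b:\,d(x,y)=2}\sigma(x)\sigma(y)$. A ground state is a periodic configuration $a$ with $U(a_b)=\min\{U_1(J),\dots,U_4(J)\}$ for every unit ball $b$. *)

From HB Require Import structures.
From mathcomp Require Import all_boot all_order all_algebra.
Set Implicit Arguments. Unset Strict Implicit. Unset Printing Implicit Defensive.
Import Order.TTheory GRing.Theory Num.Theory.

(* An element a_{i_1} a_{i_2} ... a_{i_n} (reduced: consecutive letters
   distinct) is stored as the REVERSED list [:: i_n; ...; i_1]. *)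
Definition reduced (w : seq 'I_3) : bool := sorted (fun i j : 'I_3 => i != j) w.

Definition rmul_raw (w : seq 'I_3) (i : 'I_3) : seq 'I_3 :=
  if w is j :: w' then (if j == i then w' else i :: w) else [:: i].

Lemma rmul_raw_reduced w i : reduced w -> reduced (rmul_raw w i).
Proof.
case: w => [|j w'] //= Hw.
case: (j =P i) => [_|/eqP hne]; first exact: path_sorted Hw.
by rewrite /reduced /= eq_sym hne Hw.
Qed.

Record G2 := MkG2 { gword : seq 'I_3; gwordP : reduced gword }.
HB.instance Definition _ := [isSub for gword].
HB.instance Definition _ := [Equality of G2 by <:].

Definition rmul (g : G2) (i : 'I_3) : G2 :=
  MkG2 (rmul_raw_reduced i (gwordP g)).

Definition e2 : G2 := @MkG2 [::] isT.
Definition gen (i : 'I_3) : G2 := rmul e2 i.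
Definition mul (g h : G2) : G2 := foldr (fun i acc => rmul acc i) g (gword h).
Definition inv (g : G2) : G2 := foldl (fun acc i => rmul acc i) e2 (gword g).

Definition adj (g h : G2) : Prop := exists i : 'I_3, h = mul g (gen i).

Definition inball (x y : G2) : Prop := y = x \/ exists i : 'I_3, y = mul x (gen i).

Definition neighbours (x y : G2) : Prop :=
  x <> y /\ exists u v, adj u v /\ inball x u /\ inball x v /\ inball y u /\ inball y v.

(* configurations: sigma : G2 -> bool, spin value +1 for true, -1 for false.
   A configuration on the ball at x is represented by any f : G2 -> bool,
   only its restriction to the ball mattering. *)
Definition spin {R : numDomainType} (b : bool) : R := if b then 1%R else (-1)%R.

Definition compatible (x : G2) (f : G2 -> bool) (y : G2) (f' : G2 -> bool) : Prop :=
  forall u v, adj u v -> inball x u -> inball x v -> inball y u -> inball y v ->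
    f u = f' u /\ f v = f' v.

Definition nsame (x : G2) (f : G2 -> bool) : nat :=
  count (fun i : 'I_3 => f (mul x (gen i)) == f x) (enum 'I_3).

Definition inC (m : nat) (x : G2) (f : G2 -> bool) : Prop :=
  match m with
  | 1 => nsame x f = 3
  | 2 => nsame x f = 2
  | 3 => nsame x f = 0
  | 4 => nsame x f = 1
  | _ => False
  end.

Section Energy.
Variable R : realFieldType.
Local Open Scope ring_scope.

Definition Um (m : nat) (J1 J2 : R) : R :=
  match m with
  | 1 => 3 / 2 * J1 + 3 * J2
  | 2 => 1 / 2 * J1 - J2
  | 3 => - (3 / 2) * J1 + 3 * J2
  | _ => - (1 / 2) * J1 - J2
  end.

Definition Umin (J1 J2 : R) : R :=
  Num.min (Num.min (Um 1 J1 J2) (Um 2 J1 J2)) (Num.min (Um 3 J1 J2) (Um 4 J1 J2)).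

Definition inCS (J1 J2 : R) (x : G2) (f : G2 -> bool) : Prop :=
  exists m, (1 <= m <= 4)%N /\ Um m J1 J2 = Umin J1 J2 /\ inC m x f.

(* ball energy: edges of the ball are {x, x a_i}; pairs at distance 2 in the
   ball are the pairs of distinct leaves {x a_i, x a_j}, i < j. *)
Definition Uball (J1 J2 : R) (x : G2) (f : G2 -> bool) : R :=
  1 / 2 * J1 * \sum_(i < 3) spin (f x) * spin (f (mul x (gen i)))
  + J2 * \sum_(i < 3) \sum_(j < 3 | (i < j)%N)
           spin (f (mul x (gen i))) * spin (f (mul x (gen j))).
End Energy.

Definition is_subgroup (H : G2 -> Prop) : Prop :=
  H e2 /\ (forall g h, H g -> H h -> H (mul g h)) /\ (forall g, H g -> H (inv g)).

Definition index_le (H : G2 -> Prop) (k : nat) : Prop :=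
  exists reps : seq G2, (size reps <= k)%N /\
    forall g, exists2 r, r \in reps & exists h, H h /\ g = mul h r.

Definition invariant_under (H : G2 -> Prop) (sigma : G2 -> bool) : Prop :=
  forall g h, H g -> sigma (mul g h) = sigma h.

Definition periodic (sigma : G2 -> bool) : Prop :=
  exists H, is_subgroup H /\ (exists k, index_le H k) /\ invariant_under H sigma.

Definition period_le2 (sigma : G2 -> bool) : Prop :=
  exists H, is_subgroup H /\ index_le H 2 /\ invariant_under H sigma.

Definition ground_state {R : realFieldType} (J1 J2 : R) (a : G2 -> bool) : Prop :=
  periodic a /\ forall x, Uball J1 J2 x a = Umin J1 J2.

From Pilot Require Import Defs.
From mathcomp Require Import all_boot all_order all_algebra lra.
Set Implicit Arguments.
Unset Strict Implicit.
Unset Printing Implicit Defensive.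

(* For C_2 (resp. C_4) there is a ball and an edge such that, on the
   neighbouring ball, the single leaf disagreeing (resp. agreeing) with the
   centre may sit at either of the two new leaves; so uniqueness of the
   continuation forces S(J) to avoid 2 and 4.  If every ball lies in C_1 or
   C_3, then, since adjacent centres are leaves of each other's balls, all
   balls have the same class: the configuration is constant or flips along
   every edge.  Either way it depends only on the parity of the word length,
   so it is invariant under the index-2 subgroup of even words. *)

Definition o0 : 'I_3 := @Ordinal 3 0 isT.
Definition o1 : 'I_3 := @Ordinal 3 1 isT.
Definition o2 : 'I_3 := @Ordinal 3 2 isT.

Lemma enum_ord3 : enum 'I_3 = [:: o0; o1; o2].
Proof. by apply: (inj_map val_inj); rewrite val_enum_ord. Qed.

Lemma ord3P (i : 'I_3) : [\/ i = o0, i = o1 | i = o2].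
Proof.
by case: i => [[|[|[|n]]] Hi] //;
  [apply: Or31 | apply: Or32 | apply: Or33]; apply: val_inj.
Qed.

Lemma big_ord3 (V : nmodType) (F : 'I_3 -> V) :
  (\sum_(i < 3) F i = F o0 + (F o1 + (F o2 + 0)))%R.
Proof. by rewrite -big_enum enum_ord3 !big_cons big_nil. Qed.

Lemma mul_gen x i : Defs.mul x (gen i) = rmul x i.
Proof. by []. Qed.

Lemma rmulK i : involutive (rmul^~ i).
Proof.
case=> [[|j w] Hw]; apply: val_inj => /=; first by rewrite eqxx.
case: (j =P i) => [<-|/eqP ne] /=; last by rewrite eqxx.
by case: w Hw => [|k w] //= /andP [/negbTE]; rewrite eq_sym => ->.
Qed.

Lemma G2_ind (P : G2 -> Prop) :
  P e2 -> (forall g i, P g -> P (rmul g i)) -> forall g, P g.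
Proof.
move=> P0 PS [w]; elim: w => [|i w IH] Hw.
  by have -> : MkG2 Hw = e2 by apply: val_inj.
have Hw' : reduced w := path_sorted Hw.
have -> : MkG2 Hw = rmul (MkG2 Hw') i.
  apply: val_inj => /=; case: w Hw {Hw' IH} => [|j w] //= /andP [/negbTE].
  by rewrite eq_sym => ->.
exact/PS/IH.
Qed.

Definition parity (g : G2) : bool := odd (size (gword g)).

Lemma parity_rmul g i : parity (rmul g i) = ~~ parity g.
Proof.
by rewrite /parity; case: g => [[|j w] Hw] //=; case: (j == i); rewrite //= negbK.
Qed.

Lemma parity_mul g h : parity (Defs.mul g h) = parity g (+) parity h.
Proof.
rewrite /Defs.mul {3}/parity.
elim: (gword h) => [|i s IH] /=; first by rewrite addbF.
by rewrite parity_rmul IH addbN.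
Qed.

Lemma parity_inv g : parity (Defs.inv g) = parity g.
Proof.
rewrite /Defs.inv {2}/parity -[odd _]/(parity e2 (+) odd (size (gword g))).
elim: (gword g) e2 => [|i s IH] acc /=; first by rewrite addbF.
by rewrite IH parity_rmul addNb addbN.
Qed.

Lemma even_subgroup : is_subgroup (fun g => parity g = false).
Proof.
split=> //; split=> [g h pg ph|g pg]; first by rewrite parity_mul pg ph.
by rewrite parity_inv.
Qed.

Lemma even_subgroup_index2 : index_le (fun g => parity g = false) 2.
Proof.
exists [:: e2; gen o0]; split=> // g; case pg: (parity g).
  exists (gen o0); first by rewrite !inE eqxx orbT.
  by exists (rmul g o0); rewrite parity_rmul pg mul_gen rmulK.
by exists e2; rewrite ?inE ?eqxx //; exists g.
Qed.

Lemma period_le2_parity (a : G2 -> bool) :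
  (forall g h, parity g = parity h -> a g = a h) -> period_le2 a.
Proof.
move=> a_par; exists (fun g => parity g = false).
split; first exact: even_subgroup; split; first exact: even_subgroup_index2.
by move=> g h pg; apply: a_par; rewrite parity_mul pg.
Qed.

Lemma rmul_xor_parity (a : G2 -> bool) c :
  (forall g i, a (rmul g i) = a g (+) c) -> forall g, a g = a e2 (+) c && parity g.
Proof.
move=> a_rmul; apply: G2_ind => [|g i IH]; first by rewrite andbF addbF.
rewrite a_rmul IH parity_rmul; clear a_rmul IH.
by case: c; case: (parity g); case: (a e2).
Qed.

Lemma inball_e2_gen i u : inball e2 u -> inball (gen i) u -> u = e2 \/ u = gen i.
Proof.
move=> u_e2 [->|[k u_k]]; first by right.
rewrite u_k mul_gen in u_e2 *.
case: (i =P k) => [<-|/eqP ne]; first by left; rewrite rmulK.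
by case: u_e2 => [|[j]] /(congr1 (size \o gword)); rewrite /= (negbTE ne).
Qed.

Lemma compatible_e2_gen i f f' :
  f' e2 = f e2 -> f' (gen i) = f (gen i) -> compatible e2 f (gen i) f'.
Proof.
move=> f'e f'g u v _ u_e2 v_e2 u_g v_g.
by case: (inball_e2_gen u_e2 u_g) => ->; case: (inball_e2_gen v_e2 v_g) => ->.
Qed.

Lemma neighbours_e2_gen i : neighbours e2 (gen i).
Proof.
split; first by move/(congr1 gword).
exists e2, (gen i); split; first by exists i.
split; [by left | split; [by right; exists i | split; last by left]].
by right; exists i; rewrite mul_gen rmulK.
Qed.

Lemma nsame_le3 x f : (nsame x f <= 3)%N.
Proof. by rewrite /nsame -[X in (_ <= X)%N](size_enum_ord 3) count_size. Qed.

Lemma nsame3_rmul x f i : nsame x f = 3 -> f (rmul x i) = f x.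
Proof.
rewrite /nsame enum_ord3 /= !mul_gen.
by case: (ord3P i) => ->; case: eqP; case: eqP; case: eqP.
Qed.

Lemma nsame0_rmul x f i : nsame x f = 0 -> f (rmul x i) = ~~ f x.
Proof.
move=> f0; suff: f (rmul x i) != f x by case: (f x); case: (f (rmul x i)).
move: f0; rewrite /nsame enum_ord3 /= !mul_gen.
by case: (ord3P i) => ->; case: eqP; case: eqP; case: eqP.
Qed.

Definition nsame_class (n : nat) : nat :=
  match n with 3 => 1 | 2 => 2 | 0 => 3 | _ => 4 end.

Lemma Uball_nsame_class (R : realFieldType) (J1 J2 : R) x f :
  Uball J1 J2 x f = Um (nsame_class (nsame x f)) J1 J2.
Proof.
rewrite /Uball /nsame enum_ord3 big_ord3.
under eq_bigr do rewrite big_mkcond big_ord3 /=.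
rewrite big_ord3 /= !mul_gen.
by case: (f x); case: (f (rmul x o0)); case: (f (rmul x o1)); case: (f (rmul x o2));
  rewrite /= /spin /Um; lra.
Qed.

Section UniformClass.
Variable a : G2 -> bool.
Hypothesis nsame03 : forall x, nsame x a = 0 \/ nsame x a = 3.

Lemma nsame_rmul x i : nsame (rmul x i) a = nsame x a.
Proof.
case: (nsame03 x) => ax; case: (nsame03 (rmul x i)) => axi; rewrite ax axi //.
  by have := nsame3_rmul i axi; rewrite rmulK (nsame0_rmul i ax); case: (a x).
by have := nsame0_rmul i axi; rewrite rmulK (nsame3_rmul i ax); case: (a x).
Qed.

Lemma nsame_e2 x : nsame x a = nsame e2 a.
Proof. by elim/G2_ind: x => // g i; rewrite nsame_rmul. Qed.

Lemma a_rmul g i : a (rmul g i) = a g (+) (nsame e2 a == 0).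
Proof.
have := nsame_e2 g; case: (nsame03 e2) => -> ag.
  by rewrite (nsame0_rmul i ag) addbT.
by rewrite (nsame3_rmul i ag) addbF.
Qed.

Lemma period_le2_nsame03 : period_le2 a.
Proof.
apply: period_le2_parity => g h pgh.
by rewrite (rmul_xor_parity a_rmul g) (rmul_xor_parity a_rmul h) pgh.
Qed.

End UniformClass.

Section UniqueExtension.
Variables (R : realFieldType) (J1 J2 : R).
Hypothesis unique_extension :
  forall (x : G2) (f : G2 -> bool), inCS J1 J2 x f ->
     forall y : G2, neighbours x y ->
       (exists f' : G2 -> bool, inCS J1 J2 y f' /\ compatible x f y f') /\
       (forall f1 f2 : G2 -> bool,
          inCS J1 J2 y f1 -> compatible x f y f1 ->
          inCS J1 J2 y f2 -> compatible x f y f2 ->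
          forall v, inball y v -> f1 v = f2 v).

Lemma min_class_extension_unique m i (f f1 f2 : G2 -> bool) :
  (1 <= m <= 4)%N -> Um m J1 J2 = Umin J1 J2 ->
  inC m e2 f -> inC m (gen i) f1 -> inC m (gen i) f2 ->
  f1 e2 = f e2 -> f1 (gen i) = f (gen i) ->
  f2 e2 = f e2 -> f2 (gen i) = f (gen i) ->
  forall j, f1 (rmul (gen i) j) = f2 (rmul (gen i) j).
Proof.
move=> m14 Um_min Cf Cf1 Cf2 f1e f1g f2e f2g j.
have inCS_m g h : inC m g h -> inCS J1 J2 g h by exists m.
have [_ uniq] := unique_extension (inCS_m _ _ Cf) (neighbours_e2_gen i).
apply: (uniq _ _ (inCS_m _ _ Cf1) (compatible_e2_gen f1e f1g)
              (inCS_m _ _ Cf2) (compatible_e2_gen f2e f2g)).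
by right; exists j.
Qed.

Lemma Um2_neq_Umin : Um 2 J1 J2 <> Umin J1 J2.
Proof.
move=> Um_min.
have := @min_class_extension_unique 2 o0 (fun g => gword g != [:: o2])
  (fun g => gword g != [:: o2; o0]) (fun g => gword g != [:: o1; o0]) isT Um_min.
by rewrite /inC /nsame enum_ord3 => /(_ erefl erefl erefl erefl erefl erefl erefl o1).
Qed.

Lemma Um4_neq_Umin : Um 4 J1 J2 <> Umin J1 J2.
Proof.
move=> Um_min.
have := @min_class_extension_unique 4 o1
  (fun g => (gword g == [::]) || (gword g == [:: o0]))
  (fun g => (gword g == [::]) || (gword g == [:: o0; o1]))
  (fun g => (gword g == [::]) || (gword g == [:: o2; o1])) isT Um_min.
by rewrite /inC /nsame enum_ord3 => /(_ erefl erefl erefl erefl erefl erefl erefl o0).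
Qed.

Lemma ground_state_nsame03 a : ground_state J1 J2 a ->
  forall x, nsame x a = 0 \/ nsame x a = 3.
Proof.
move=> [_ ground] x; have := ground x; rewrite Uball_nsame_class.
case: (nsame x a) (nsame_le3 x a) => [|[|[|[|n]]]] //= _; first by left.
- by move/Um4_neq_Umin.
- by move/Um2_neq_Umin.
- by right.
Qed.

End UniqueExtension.

Theorem lemma5p2 (R : realFieldType) (J1 J2 : R) :
  (forall (x : G2) (f : G2 -> bool), inCS J1 J2 x f ->
     forall y : G2, neighbours x y ->
       (exists f' : G2 -> bool, inCS J1 J2 y f' /\ compatible x f y f') /\
       (forall f1 f2 : G2 -> bool,
          inCS J1 J2 y f1 -> compatible x f y f1 ->
          inCS J1 J2 y f2 -> compatible x f y f2 ->
          forall v, inball y v -> f1 v = f2 v)) ->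
  forall a : G2 -> bool, ground_state J1 J2 a -> period_le2 a.
Proof.
move=> unique_extension a /(ground_state_nsame03 unique_extension) nsame03.
exact: period_le2_nsame03.
Qed.
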